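(* Let $q$ be a prime power and $n\ge4$. Then $$\mathbb{E}_q(n,1)=2^{\left\lfloor\log_2\left(\frac{q^{n-1}-1}{q-1}+1\right)\right\rfloor}\le\mathbb{E}_q(n).$$ Moreover, there is an equidistant linear code in $\mathbb{P}_q(n)$ with constant distance $2$ and of size $\mathbb{E}_q(n,1)$ whose nontrivial part is contained in a sunflower $\{V\in\mathbb{G}_q(n,2): W\subset V\}$ for some $W\in\mathbb{G}_q(n,1)$.
   Context: $\mathbb{P}_q(n)$ denotes the set of all subspaces of $\mathbb{F}_q^n$ and $\mathbb{G}_q(n,k)$ the set of $k$-dimensional subspaces. For subspaces $X,Y$ the subspace distance is $d_S(X,Y)=\dim X+\dim Y-2\dim(X\cap Y)$. A linear code in $\mathbb{P}_q(n)$ is a subset $\mathcal{U}\subseteq\mathbb{P}_q(n)$ with $\{0\}\in\mathcal{U}$ for which there exists a map $\boxplus:\mathcal{U}\times\mathcal{U}\to\mathcal{U}$ such that (i) $(\mathcal{U},\boxplus)$ is an abelian group; (ii) its identity element is $\{0\}$; (iii) $X\boxplus X=\{0\}$ for all $X\in\mathcal{U}$; (iv) $d_S(Y_1\boxplus X,Y_2\boxplus X)=d_S(Y_1,Y_2)$ for all $Y_1,Y_2,X\in\mathcal{U}$. Its nontrivial part is $\mathcal{U}\setminus\{\{0\}\}$. It is equidistant with constant distance $r$ if $d_S(X,Y)=r$ for all distinct $X,Y\in\mathcal{U}$. $\mathbb{E}_q(n)$ denotes the maximum size of an equidistant linear code in $\mathbb{P}_q(n)$, and $\mathbb{E}_q(n,d)$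 the maximum size of an equidistant linear code in $\mathbb{P}_q(n)$ with constant distance $2d$. A sunflower is a family of $k$-subspaces any two distinct members of which intersect in the same fixed subspace (its center). *)

From HB Require Import structures.
From mathcomp Require Import all_boot all_order all_algebra.
Set Implicit Arguments. Unset Strict Implicit. Unset Printing Implicit Defensive.
Import GRing.Theory VectorInternalTheory.

Section FinVspace.
Variables (F : finFieldType) (vT : vectType F).
HB.instance Definition _ : isCountable {vspace vT} := CanIsCountable (@vs2mxK F vT).
HB.instance Definition _ : isFinite {vspace vT} := CanIsFinite (@vs2mxK F vT).
End FinVspace.

Section Codes.
Variables (F : finFieldType) (n : nat).

Local Notation vs := {vspace 'rV[F]_n}.

Definition sdist (X Y : vs) : nat := (\dim X + \dim Y - 2 * \dim (X :&: Y))%N.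

(* the operation op (extended arbitrarily outside U x U) satisfies
   (i)-(iv) on U: closure, associativity, commutativity, identity {0},
   inverses, X op X = {0}, translation invariance of d_S *)
Definition linear_code_op (U : {set vs}) (op : {ffun vs * vs -> vs}) : bool :=
  [&& [forall X in U, forall Y in U, op (X, Y) \in U],
      [forall X in U, forall Y in U, forall Z in U,
         op (op (X, Y), Z) == op (X, op (Y, Z))],
      [forall X in U, forall Y in U, op (X, Y) == op (Y, X)],
      [forall X in U, (op (0%VS, X) == X) && (op (X, 0%VS) == X)],
      [forall X in U, exists Y in U, op (X, Y) == 0%VS],
      [forall X in U, op (X, X) == 0%VS] &
      [forall Y1 in U, forall Y2 in U, forall X in U,
         sdist (op (Y1, X)) (op (Y2, X)) == sdist Y1 Y2]].

Definition linear_code (U : {set vs}) : bool :=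
  (0%VS \in U) && [exists op, linear_code_op U op].

Definition equidistant_with (U : {set vs}) (r : nat) : bool :=
  [forall X in U, forall Y in U, (X != Y) ==> (sdist X Y == r)].

Definition equidistant (U : {set vs}) : bool :=
  [forall X in U, forall Y in U, forall X' in U, forall Y' in U,
     (X != Y) && (X' != Y') ==> (sdist X Y == sdist X' Y')].

Definition Eq_max : nat :=
  \max_(U : {set vs} | linear_code U && equidistant U) #|U|.

Definition Eq_max_d (d : nat) : nat :=
  \max_(U : {set vs} | linear_code U && equidistant_with U (2 * d)) #|U|.

End Codes.

From mathcomp Require Import all_boot all_order all_algebra finfield zify.
Set Implicit Arguments. Unset Strict Implicit. Unset Printing Implicit Defensive.

(* A linear code U satisfies X ⊞ X = {0}, so it is an elementary abelian
   2-group and |U| is a power of 2 (a subgroup H missing a doubles to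
   H ∪ (a ⊞ H)).  Conversely any set of 2^k subspaces containing {0} carries
   such a group law, transported from xor on bool^k, and when the set is
   equidistant every translation is an isometry, so the set is a linear code.
   In an equidistant code of distance 2 the nonzero codewords are planes
   pairwise meeting in lines.  Either all of them contain the line P = A ∩ B of
   two of them, and they are among the [n-1]_q planes through P, or some C
   avoids P: a plane through P is then determined by its line in C (at most
   q + 1 choices), any other one by its lines in A and B distinct from P (at
   most q^2 choices), and q^2 + q + 1 <= [n-1]_q as n >= 4.  Hence
   |U| <= 2^⌊log2([n-1]_q + 1)⌋, and {0} with 2^k - 1 planes through a fixed
   line attains the bound.  Here [m]_q = 1 + q + ... + q^(m-1) is [qint q m]. *)

Record boolean_group (T : finType) (U : {set T}) (e : T) (op : T -> T -> T) :
    Prop := BooleanGroup {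
  bg_unit : e \in U;
  bg_closed : {in U &, forall x y, op x y \in U};
  bg_assoc : {in U & &, associative op};
  bg_comm : {in U &, commutative op};
  bg_left_id : {in U, left_id e op};
  bg_opxx : {in U, forall x, op x x = e}
}.

Section BooleanGroupCard.
Variables (T : finType) (U : {set T}) (e : T) (op : T -> T -> T).
Hypothesis bgU : boolean_group U e op.

Lemma bg_opK : {in U &, forall x y, op x (op x y) = y}.
Proof.
by case: bgU => _ _ opA _ op1 opxx x y xU yU; rewrite opA // opxx // op1.
Qed.

Lemma bg_opCA : {in U & &, forall x y z, op x (op y z) = op y (op x z)}.
Proof.
by case: bgU => _ _ opA opC _ _ x y z xU yU zU; rewrite !opA // (opC x y).
Qed.

Definition boolean_subgroup (H : {set T}) :=
  [/\ H \subset U, e \in H & {in H &, forall x y, op x y \in H}].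

Lemma boolean_subgroup_double H a :
    boolean_subgroup H -> a \in U -> a \notin H ->
  exists H', [/\ boolean_subgroup H', H \subset H', a \in H' & #|H'| = 2 * #|H|].
Proof.
case: (bgU) => eU clU opA opC op1 _ [sHU eH clH] aU aNH.
have HU : {subset H <= U} by apply/subsetP.
set aH := [set op a h | h in H].
have disj : [disjoint H & aH].
  rewrite -setI_eq0; apply/eqP/setP => x; rewrite !inE.
  apply/negbTE/andP => -[xH /imsetP[h hH x_eq]].
  have : op h x \in H by rewrite clH.
  by rewrite x_eq (opC a h aU (HU h hH)) (bg_opK (HU h hH) aU); exact/negP.
have card_aH : #|aH| = #|H|.
  apply: card_in_imset => h h' hH h'H eq_ah.
  by rewrite -(bg_opK aU (HU h hH)) eq_ah (bg_opK aU (HU h' h'H)).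
have aHU : aH \subset U.
  by apply/subsetP => _ /imsetP[h hH ->]; exact: clU aU (HU h hH).
have opaH x h : x \in H -> h \in H -> op x (op a h) = op a (op x h).
  by move=> xH hH; exact: bg_opCA (HU x xH) aU (HU h hH).
exists (H :|: aH); split; last first.
- by rewrite mul2n -addnn -{2}card_aH; apply/eqP; rewrite (leq_card_setU _ _).2.
- by apply/setUP; right; apply/imsetP; exists e; rewrite // opC ?op1.
- exact: subsetUl.
split; [by rewrite subUset sHU | by rewrite inE eH |].
move=> x y; rewrite !inE => /orP[xH|/imsetP[h hH ->]] /orP[yH|/imsetP[h' h'H ->]].
- by rewrite clH.
- by apply/orP; right; rewrite opaH // imset_f ?clH.
- have hU := HU h hH; have yU := HU y yH.
  by apply/orP; right; rewrite opC ?clU // opaH // imset_f ?clH.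
- have hU := HU h hH; have h'U := HU h' h'H.
  by apply/orP; left; rewrite -opA ?clU // opaH // bg_opK ?clU // clH.
Qed.

Lemma card_boolean_subgroup H :
  boolean_subgroup H -> exists k, #|U| = 2 ^ k * #|H|.
Proof.
have [m] := ubnP #|U :\: H|; elim: m H => // m IH H ltm bgH.
have [sUH | /subsetPn[a aU aH]] := boolP (U \subset H).
  have -> : U = H by apply/eqP; rewrite eqEsubset sUH; case: bgH.
  by exists 0; rewrite mul1n.
have [H' [bgH' sHH' aH' cardH']] := boolean_subgroup_double bgH aU aH.
have [|k cardU] := IH _ _ bgH'.
  suff /proper_card : U :\: H' \proper U :\: H by lia.
  apply/properP; split; first exact: setDS.
  by exists a; rewrite !inE ?aU ?aH // aH'.
by exists k.+1; rewrite cardU cardH' expnSr mulnA.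
Qed.

Lemma card_boolean_group : exists k, #|U| = 2 ^ k.
Proof.
case: (bgU) => eU _ _ _ op1 _.
have [|k cardU] := @card_boolean_subgroup [set e].
  split; rewrite ?sub1set ?set11 // => x y /set1P-> /set1P->.
  by rewrite op1 ?set11.
by exists k; rewrite cardU cards1 muln1.
Qed.

End BooleanGroupCard.

Lemma boolean_group_of_card (T : finType) (S : {set T}) (e : T) K :
  e \in S -> #|S| = 2 ^ K -> exists op, boolean_group S e op.
Proof.
move=> eS cardS.
pose B := {ffun 'I_K -> bool}.
have cardB : #|B| = #|S| by rewrite card_ffun card_bool card_ord.
pose g (b : B) : T := enum_val (cast_ord cardB (enum_rank b)).
pose f (x : T) : B := enum_val (cast_ord (esym cardB) (enum_rank_in eS x)).
have gS b : g b \in S by apply: enum_valP.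
have gK : cancel g f by move=> b; rewrite /f /g enum_valK_in cast_ordK enum_rankK.
have fK : {in S, cancel f g}.
  by move=> x xS; rewrite /f /g enum_valK cast_ordKV enum_rankK_in.
pose xor (b c : B) : B := [ffun i => b i (+) c i].
(* xor on bool^K, transported to S and translated so that e is the identity *)
exists (fun x y => g (xor (xor (f x) (f y)) (f e))).
split=> // [x y z _ _ _|x y _ _|x xS|x _]; rewrite ?gK.
- by congr g; apply/ffunP => i; rewrite !ffunE;
    case: (f x i); case: (f y i); case: (f z i); case: (f e i).
- by congr g; apply/ffunP => i; rewrite !ffunE; case: (f x i); case: (f y i).
- by rewrite -[RHS]fK //; congr g; apply/ffunP => i; rewrite !ffunE;
    case: (f x i); case: (f e i).
- by rewrite -[RHS]fK //; congr g; apply/ffunP => i; rewrite !ffunE;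
    case: (f x i); case: (f e i).
Qed.

Lemma exists_subset_card (T : finType) (A : {set T}) m :
  m <= #|A| -> exists2 B : {set T}, B \subset A & #|B| = m.
Proof.
elim: m => [|m IHm] ltmA; first by exists set0; rewrite ?sub0set ?cards0.
have [B sBA cardB] := IHm (ltnW ltmA).
have /subsetPn[x xA xB] : ~~ (A \subset B).
  by apply: contraTN ltmA => /subset_leq_card; rewrite cardB -ltnNge.
by exists (x |: B); rewrite ?subUset ?sub1set ?xA ?sBA // cardsU1 xB cardB.
Qed.

Section Subspaces.
Variables (K : fieldType) (vT : vectType K).
Implicit Types (U V W L : {vspace vT}) (v : vT).

Lemma dimv_cap_lt V W : \dim V = \dim W -> V != W -> \dim (V :&: W) < \dim V.
Proof.
move=> dVW; apply: contraNT; rewrite -leqNgt => dcap.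
have /eqP capV : (V :&: W)%VS == V by rewrite eqEdim capvSl.
by rewrite eqEdim -dVW leqnn andbT -{1}capV capvSr.
Qed.

Lemma capv_line_eq0 L V : \dim L = 1 -> ~~ (L <= V)%VS -> (L :&: V)%VS = 0%VS.
Proof.
move=> dL LV; apply/eqP; rewrite -dimv_eq0 -leqn0 -ltnS -dL.
rewrite ltn_neqAle dimvS ?capvSl // andbT; apply: contra LV => /eqP dcap.
have /eqP <- : (L :&: V)%VS == L by rewrite eqEdim capvSl dcap leqnn.
exact: capvSr.
Qed.

Lemma dimv_add_line U v : v \notin U -> \dim (U + <[v]>) = (\dim U).+1.
Proof.
move=> vU; have v0 : v != 0%R by apply: contraNneq vU => ->; exact: mem0v.
have dv : \dim <[v]> = 1 by rewrite dim_vline v0.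
have := dimv_sum_cap U <[v]>; rewrite capvC capv_line_eq0 -?memvE // dimv0 dv.
by rewrite addn0 addn1.
Qed.

Lemma addv_lines_eq V L1 L2 :
    \dim V = 2 -> \dim L1 = 1 -> \dim L2 = 1 ->
    (L1 <= V)%VS -> (L2 <= V)%VS -> L1 != L2 -> (L1 + L2)%VS = V.
Proof.
move=> dV dL1 dL2 L1V L2V L12; have := dimv_cap_lt (etrans dL1 (esym dL2)) L12.
rewrite dL1 ltnS leqn0 => /eqP dcap; have := dimv_sum_cap L1 L2.
rewrite dcap dL1 dL2 addn0 => dsum.
by apply/eqP; rewrite eqEdim subv_add L1V L2V dV dsum.
Qed.

Lemma dimv_cap_planes W V V' :
    \dim W = 1 -> \dim V = 2 -> \dim V' = 2 -> (W <= V)%VS -> (W <= V')%VS ->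
  V != V' -> \dim (V :&: V') = 1.
Proof.
move=> dW dV dV' WV WV' VV'; apply/eqP; rewrite eqn_leq -ltnS -dV.
by rewrite dimv_cap_lt ?dV ?dV' // -dW dimvS // subv_cap WV WV'.
Qed.

End Subspaces.

Definition qint (q m : nat) : nat := \sum_(i < m) q ^ i.

Lemma qintS q m : qint q m.+1 = qint q m + q ^ m.
Proof. by rewrite /qint big_ord_recr. Qed.

Lemma qint_pred_exp q m : (q ^ m).-1 = q.-1 * qint q m.
Proof. exact: predn_exp. Qed.

Lemma leq_qint q : {homo qint q : m m' / m <= m'}.
Proof.
by apply: homo_leq => [//|m1 m2 m3|m]; [exact: leq_trans | rewrite qintS leq_addr].
Qed.

Lemma qint2 q : qint q 2 = q.+1.
Proof. by rewrite qintS /qint big_ord1 expn0 expn1 add1n. Qed.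

Lemma qint3 q : qint q 3 = q.+1 + q * q.
Proof. by rewrite qintS qint2 mulnn. Qed.

Section Counting.
Variables (F : finFieldType) (n : nat).
Local Notation vs := {vspace 'rV[F]_n}.
Local Notation q := #|F|.

Lemma dim_fullv : \dim (fullv : vs) = n.
Proof. by rewrite dimvf /dim /= mul1n. Qed.

Lemma card_vspaceD (Z X : vs) :
  (Z <= X)%VS -> #|[predD X & Z]| = q ^ \dim X - q ^ \dim Z.
Proof.
move=> ZX; rewrite -!card_vspace -(cardID Z X) -[#|Z|](@eq_card _ [predI X & Z]).
  by rewrite addKn.
by move=> v; rewrite !inE andb_idl // => /(subvP ZX).
Qed.

Definition covers_in (Z X : vs) : {set vs} :=
  [set V : vs | [&& \dim V == (\dim Z).+1, (Z <= V)%VS & (V <= X)%VS]].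

(* Each v in X outside Z lies in exactly one cover of Z in X: Z + <[v]>. *)
Lemma card_covers_inM (Z X : vs) : (Z <= X)%VS ->
  #|covers_in Z X| * (q ^ (\dim Z).+1 - q ^ \dim Z) = q ^ \dim X - q ^ \dim Z.
Proof.
move=> ZX; rewrite -card_vspaceD // -[RHS]sum1_card.
rewrite (partition_big (fun v => Z + <[v]>)%VS [in covers_in Z X]) /=; last first.
  move=> v; rewrite !inE => /andP[vZ vX].
  by rewrite dimv_add_line // addvSl subv_add ZX -memvE vX eqxx.
rewrite -sum_nat_const; apply: eq_bigr => V; rewrite inE => /and3P[/eqP dV ZV VX].
rewrite -dV -card_vspaceD // sum1_card; apply: eq_card => v; rewrite !inE /=.
apply/andP/andP => [[vZ vV]|[/andP[vZ _] /eqP<-]].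
  split; first by rewrite !inE vZ (subvP VX).
  by rewrite eqEdim subv_add ZV -memvE vV dimv_add_line ?dV /=.
by rewrite vZ (subvP (addvSr Z _)) ?memv_line.
Qed.

Lemma card_covers_in (Z X : vs) :
  (Z <= X)%VS -> #|covers_in Z X| = qint q (\dim X - \dim Z).
Proof.
move=> ZX; have := card_covers_inM ZX.
have -> : q ^ (\dim Z).+1 - q ^ \dim Z = q ^ \dim Z * q.-1.
  by rewrite expnS -subn1 mulnBr muln1 mulnC.
have -> : q ^ \dim X - q ^ \dim Z = q ^ \dim Z * q.-1 * qint q (\dim X - \dim Z).
  by rewrite -mulnA -qint_pred_exp -subn1 mulnBr muln1 -expnD subnKC // dimvS.
have pos : 0 < q ^ \dim Z * q.-1.
  by rewrite muln_gt0 expn_gt0 (ltnW (finNzRing_gt1 F)) -subn1 subn_gt0 finNzRing_gt1.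
by rewrite mulnC => /eqP; rewrite eqn_pmul2l // => /eqP.
Qed.

Lemma card_lines (C : vs) : \dim C = 2 -> #|covers_in 0 C| = q.+1.
Proof. by move=> dC; rewrite card_covers_in ?sub0v // dC dimv0 qint2. Qed.

Lemma card_planes_through (W : vs) :
  \dim W = 1 -> #|covers_in W fullv| = qint q n.-1.
Proof. by move=> dW; rewrite card_covers_in ?subvf // dim_fullv dW subn1. Qed.


Section PlaneFamily.
Variable fam : {set vs}.
Hypothesis dim_fam : {in fam, forall V, \dim V = 2}.
Hypothesis cap_fam : {in fam &, forall V V', V != V' -> \dim (V :&: V') = 1}.

Lemma card_fam_through (P C : vs) : \dim P = 1 -> C \in fam -> ~~ (P <= C)%VS ->
  #|fam :&: [set V | (P <= V)%VS]| <= q.+1.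
Proof.
move=> dP Cf PC; rewrite -(card_lines (dim_fam Cf)).
have decomp V : V \in fam :&: [set V | (P <= V)%VS] ->
    \dim (V :&: C) = 1 /\ (P + (V :&: C))%VS = V.
  rewrite !inE => /andP[Vf PV].
  have VC : V != C by apply: contraNneq PC => <-.
  have dVC := cap_fam Vf Cf VC; split=> //.
  apply: addv_lines_eq (dim_fam Vf) dP dVC PV (capvSl V C) _.
  by apply: contraNneq PC => ->; exact: capvSr.
rewrite -(card_in_imset (f := fun V => V :&: C)%VS); last first.
  by move=> V V' /decomp[_ eV] /decomp[_ eV'] /= eqVC; rewrite -eV -eV' eqVC.
apply/subset_leq_card/subsetP => _ /imsetP[V /decomp[dVC _] ->].
by rewrite inE dimv0 dVC sub0v capvSr.
Qed.

Lemma card_fam_avoiding (A B : vs) : A \in fam -> B \in fam -> A != B ->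
  #|fam :\: [set V | (A :&: B <= V)%VS]| <= q * q.
Proof.
move=> Af Bf AB; set P := (A :&: B)%VS.
have dP : \dim P = 1 by exact: cap_fam.
have lines_off X : X \in fam -> (P <= X)%VS -> #|covers_in 0 X :\ P| = q.
  move=> Xf PX; have := card_lines (dim_fam Xf).
  by rewrite (cardsD1 P) !inE dimv0 dP sub0v PX add1n => -[].
have decomp V : V \in fam :\: [set V | (P <= V)%VS] ->
    [/\ (V :&: A)%VS \in covers_in 0 A :\ P, (V :&: B)%VS \in covers_in 0 B :\ P
       & ((V :&: A) + (V :&: B))%VS = V].
  rewrite !inE => /andP[PV Vf].
  have VA : V != A by apply: contraNneq PV => ->; exact: capvSl.
  have VB : V != B by apply: contraNneq PV => ->; exact: capvSr.
  have dVA := cap_fam Vf Af VA; have dVB := cap_fam Vf Bf VB.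
  have VAP : (V :&: A)%VS != P by apply: contraNneq PV => <-; exact: capvSl.
  have VBP : (V :&: B)%VS != P by apply: contraNneq PV => <-; exact: capvSl.
  have VAB : (V :&: A)%VS != (V :&: B)%VS.
    apply: contraNneq VAP => VAB; rewrite eqEdim dP dVA leqnn andbT.
    by rewrite subv_cap capvSr VAB capvSr.
  rewrite VAP VBP dimv0 dVA dVB !sub0v !capvSr; split=> //.
  exact: addv_lines_eq (dim_fam Vf) dVA dVB (capvSl V A) (capvSl V B) VAB.
rewrite -{1}(lines_off A Af (capvSl A B)) -(lines_off B Bf (capvSr A B)) -cardsX.
rewrite -(card_in_imset (f := fun V => ((V :&: A)%VS, (V :&: B)%VS))); last first.
  move=> V V' /decomp[_ _ eV] /decomp[_ _ eV'] /eqP.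
  rewrite xpair_eqE => /andP[/eqP eqVA /eqP eqVB].
  by rewrite -eV -eV' eqVA eqVB.
apply/subset_leq_card/subsetP => _ /imsetP[V /decomp[VA VB _] ->].
by rewrite inE VA VB.
Qed.

Lemma card_plane_family : 4 <= n -> #|fam| <= qint q n.-1.
Proof.
move=> n4; have q3 : qint q 3 <= qint q n.-1 by apply: leq_qint; lia.
have [|/card_gt1P[A [B [Af Bf AB]]]] := leqP #|fam| 1.
  by move/leq_trans; apply; apply: leq_trans q3; rewrite qint3.
set P := (A :&: B)%VS; have dP : \dim P = 1 by exact: cap_fam.
have [sun|/forall_inPn[C Cf PC]] := boolP [forall V in fam, P <= V]%VS.
  rewrite -(card_planes_through dP); apply/subset_leq_card/subsetP => V Vf.
  by rewrite inE dim_fam // dP subvf (forall_inP sun).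
rewrite -(cardsID [set V | (P <= V)%VS] fam).
apply: leq_trans q3; rewrite qint3 leq_add //.
  exact: card_fam_through PC.
exact: card_fam_avoiding.
Qed.

End PlaneFamily.

Lemma equidistant_withP (U : {set vs}) r :
  reflect {in U &, forall X Y, X != Y -> sdist X Y = r} (equidistant_with U r).
Proof.
apply: (iffP forall_inP) => [eqU X Y XU YU XY | eqU X XU].
  by move/forall_inP: (eqU X XU) => /(_ Y YU) /implyP /(_ XY) /eqP.
by apply/forall_inP => Y YU; apply/implyP => XY; rewrite eqU.
Qed.

Lemma equidistant_withW (U : {set vs}) r : equidistant_with U r -> equidistant U.
Proof.
move/equidistant_withP => eqU.
apply/forall_inP => X XU; apply/forall_inP => Y YU; apply/forall_inP => X' X'U.
by apply/forall_inP => Y' Y'U; apply/implyP => /andP[XY X'Y']; rewrite !eqU.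
Qed.

Section Equidistant2.
Variable U : {set vs}.
Hypotheses (U0 : 0%VS \in U) (eqU : equidistant_with U 2).

Lemma dim_equidistant2 : {in U :\ 0%VS, forall V, \dim V = 2}.
Proof.
move=> V; rewrite !inE => /andP[V0 VU].
have := (equidistant_withP _ _ eqU) _ _ U0 VU; rewrite eq_sym => /(_ V0).
by rewrite /sdist cap0v dimv0 muln0 subn0.
Qed.

Lemma dim_cap_equidistant2 :
  {in U :\ 0%VS &, forall V V', V != V' -> \dim (V :&: V') = 1}.
Proof.
move=> V V' VU V'U VV'.
have [dV dV'] := (dim_equidistant2 VU, dim_equidistant2 V'U).
move: VU V'U; rewrite !inE => /andP[_ VU] /andP[_ V'U].
by have := (equidistant_withP _ _ eqU) V V' VU V'U VV'; rewrite /sdist dV dV'; lia.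
Qed.

Lemma card_equidistant2 : 4 <= n -> #|U| <= (qint q n.-1).+1.
Proof.
move=> n4; rewrite (cardsD1 0%VS) U0 add1n ltnS.
exact: card_plane_family dim_equidistant2 dim_cap_equidistant2 n4.
Qed.

End Equidistant2.

Lemma linear_code_boolean_group (U : {set vs}) :
  linear_code U -> exists op, boolean_group U 0%VS op.
Proof.
case/andP=> U0 /existsP[op /and5P[cl opA opC op1 /and3P[_ opxx _]]].
exists (fun X Y => op (X, Y)); split=> // [X Y XU YU|X Y Z XU YU ZU|X Y XU YU|X XU|X XU].
- by move/forall_inP: cl => /(_ X XU) /forall_inP /(_ Y YU).
- move/forall_inP: opA => /(_ X XU) /forall_inP /(_ Y YU) /forall_inP /(_ Z ZU) /eqP.
  by move=> ->.
- by move/forall_inP: opC => /(_ X XU) /forall_inP /(_ Y YU) /eqP.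
- by move/forall_inP: op1 => /(_ X XU) /andP[/eqP].
- by move/forall_inP: opxx => /(_ X XU) /eqP.
Qed.

Lemma boolean_group_linear_code (U : {set vs}) r op :
  equidistant_with U r -> boolean_group U 0%VS op -> linear_code U.
Proof.
move/equidistant_withP => eqU bgU; case: (bgU) => U0 cl opA opC op1 opxx.
rewrite /linear_code U0; apply/existsP; exists [ffun p => op p.1 p.2].
apply/and5P; split; [| | | | apply/and3P; split].
- by apply/forall_inP => X XU; apply/forall_inP => Y YU; rewrite ffunE cl.
- apply/forall_inP => X XU; apply/forall_inP => Y YU; apply/forall_inP => Z ZU.
  by rewrite !ffunE /= opA ?cl.
- by apply/forall_inP => X XU; apply/forall_inP => Y YU; rewrite !ffunE /= opC.
- by apply/forall_inP => X XU; rewrite !ffunE /= op1 // opC ?op1 ?eqxx.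
- by apply/forall_inP => X XU; apply/existsP; exists X; rewrite XU ffunE /= opxx.
- by apply/forall_inP => X XU; rewrite ffunE /= opxx.
apply/forall_inP => Y1 Y1U; apply/forall_inP => Y2 Y2U; apply/forall_inP => X XU.
rewrite !ffunE /=; have [->|Y12] := eqVneq Y1 Y2; first by rewrite /sdist !capvv; lia.
rewrite !eqU ?cl //; apply: contraNneq Y12 => eqY.
by rewrite -(bg_opK bgU XU Y1U) -(bg_opK bgU XU Y2U) (opC X Y1) // eqY (opC Y2 X).
Qed.

Lemma card_linear_equidistant2 (U : {set vs}) :
    4 <= n -> linear_code U -> equidistant_with U 2 ->
  #|U| <= 2 ^ trunc_log 2 (qint q n.-1).+1.
Proof.
move=> n4 LU eqU; have [op bgU] := linear_code_boolean_group LU.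
have [k cardU] := card_boolean_group bgU; rewrite cardU leq_pexp2l //.
by apply: trunc_log_max => //; rewrite -cardU card_equidistant2 // (bg_unit bgU).
Qed.

Lemma sunflower_code (W : vs) K :
    \dim W = 1 -> 2 ^ K <= (qint q n.-1).+1 ->
  exists U : {set vs}, [/\ linear_code U, equidistant_with U 2, #|U| = 2 ^ K
                         & U :\ 0%VS \subset covers_in W fullv].
Proof.
move=> dW le2K; rewrite -(card_planes_through dW) in le2K.
have [T sTsun cardT] : exists2 T : {set vs}, T \subset covers_in W fullv & #|T| = (2 ^ K).-1.
  by apply: exists_subset_card; rewrite -ltnS prednK ?expn_gt0.
have planeT V : V \in T -> \dim V = 2 /\ (W <= V)%VS.
  by move/(subsetP sTsun); rewrite inE dW => /and3P[/eqP-> ->].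
have T0 : 0%VS \notin T by apply/negP => /planeT[]; rewrite dimv0.
have cardU : #|0%VS |: T| = 2 ^ K by rewrite cardsU1 T0 cardT add1n prednK ?expn_gt0.
have eqU : equidistant_with (0%VS |: T) 2.
  apply/equidistant_withP => X Y /setU1P[->|/planeT[dX WX]] /setU1P[->|/planeT[dY WY]].
  - by rewrite eqxx.
  - by rewrite /sdist cap0v !dimv0 dY.
  - by rewrite /sdist capv0 !dimv0 dX.
  - by move=> XY; rewrite /sdist dX dY (dimv_cap_planes dW dX dY WX WY XY).
have [op bgU] := boolean_group_of_card (setU11 0%VS T) cardU.
exists (0%VS |: T); split=> //; first exact: boolean_group_linear_code eqU bgU.
by rewrite setU1K.
Qed.

Lemma exists_line : 0 < n -> exists W : vs, \dim W = 1.
Proof.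
move=> n_gt0; exists <[vpick fullv]>%VS.
by rewrite dim_vline vpick0 -dimv_eq0 dim_fullv -lt0n n_gt0.
Qed.

End Counting.

Theorem proposition4 (F : finFieldType) (q n : nat) :
  #|F| = q -> (4 <= n)%N ->
  [/\ Eq_max_d F n 1 = 2 ^ trunc_log 2 ((q ^ (n - 1) - 1) %/ (q - 1) + 1),
      (Eq_max_d F n 1 <= Eq_max F n)%N &
      exists U : {set {vspace 'rV[F]_n}},
        [/\ linear_code U, equidistant_with U 2, #|U| = Eq_max_d F n 1 &
            exists W : {vspace 'rV[F]_n}, \dim W = 1%N /\
              forall V, V \in U -> V != 0%VS -> \dim V = 2%N /\ (W <= V)%VS]].
Proof.
move=> <- n4; set N := qint #|F| n.-1.
have -> : (#|F| ^ (n - 1) - 1) %/ (#|F| - 1) = N.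
  by rewrite !subn1 qint_pred_exp mulKn // -subn1 subn_gt0 finNzRing_gt1.
rewrite addn1; set K := trunc_log 2 N.+1.
have [W dW] := exists_line F (leq_trans (isT : 0 < 4) n4).
have [U [LU eqU cardU sunU]] := sunflower_code dW (trunc_logP (leqnn 2) (ltn0Sn N)).
have EK : Eq_max_d F n 1 = 2 ^ K.
  apply/eqP; rewrite eqn_leq -{2}cardU; apply/andP; split.
    by apply/bigmax_leqP => V /andP[LV eqV]; exact: card_linear_equidistant2.
  by apply: leq_bigmax_cond; rewrite LU.
split=> //.
  apply/bigmax_leqP => V /andP[LV eqV]; apply: leq_bigmax_cond.
  by rewrite LV; exact: equidistant_withW eqV.
exists U; split=> //; first by rewrite EK.
exists W; split=> // V VU V0; have := subsetP sunU V; rewrite !inE V0 VU dW.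
by move=> /(_ isT) /and3P[/eqP-> ->].
Qed.
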